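(* Let $u\in C(\mathbb{R}^n)$ and define $\tilde u(t,x)=u(x)$ for all $(t,x)\in\mathbb{R}\times\mathbb{R}^n$. Then $\tilde u$ is a viscosity super-solution (resp. sub-solution) of the parabolic PDE $$\frac{\partial u}{\partial t}+\mathcal{L}u(t,x)+g(u(t,x),u_x(t,x)\sigma(x))=0$$ if and only if $u$ is a viscosity super-solution (resp. sub-solution) of the elliptic PDE $$\mathcal{L}u(x)+g(u(x),u_x(x)\sigma(x))=0.$$
   Context: Here $g:\mathbb{R}\times\mathbb{R}^n\to\mathbb{R}$, $b:\mathbb{R}^n\to\mathbb{R}^n$, $\sigma:\mathbb{R}^n\to\mathbb{R}^{n\times n}$, $u_x$ is the gradient viewed as a row vector, and $\mathcal{L}u=\sum_i b_i\frac{\partial u}{\partial x_i}+\frac12\sum_{i,j}(\sigma\sigma^{T})_{ij}\frac{\partial^2 u}{\partial x_i\partial x_j}$. A function $v\in C(\mathbb{R}\times\mathbb{R}^n)$ is a viscosity super-solution (resp. sub-solution) of the parabolic PDE if for every $(t,x)$ and every $\varphi\in C^{1,2}(\mathbb{R}\times\mathbb{R}^n)$ with $\varphi(t,x)=v(t,x)$ and $(t,x)$ a maximum (resp. minimum) point of $\varphi-v$, one has $\frac{\partial\varphi}{\partial t}(t,x)+\mathcal{L}\varphi(t,x)+g(\varphi(t,x),\varphi_x(t,x)\sigma(x))\le 0$ (resp. $\ge 0$). Analogously, $u\in C(\mathbb{R}^n)$ is a viscosity super-solution (resp. sub-solution) of the elliptic PDE if for every $x_0$ and every $\varphi\in C^2(\mathbb{R}^n)$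 with $\varphi(x_0)=u(x_0)$ and $x_0$ a maximum (resp. minimum) point of $\varphi-u$, one has $\mathcal{L}\varphi(x_0)+g(\varphi(x_0),\varphi_x(x_0)\sigma(x_0))\le 0$ (resp. $\ge 0$). A viscosity solution is both a super- and sub-solution. *)

(* R^n is modelled as the row-vector type 'rV[R]_n. *)
From HB Require Import structures.
From mathcomp Require Import all_boot all_order all_algebra.
From mathcomp Require Import all_classical all_reals all_analysis.
Set Implicit Arguments. Unset Strict Implicit. Unset Printing Implicit Defensive.
Import Order.TTheory GRing.Theory Num.Theory.
Import numFieldNormedType.Exports.
Local Open Scope ring_scope.

Section Visc.
Variables (R : realType) (n : nat).

Definition evec (i : 'I_n) : 'rV[R]_n := delta_mx ord0 i.

Definition dpart (i : 'I_n) (f : 'rV[R]_n -> R) (x : 'rV[R]_n) : R :=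
  derive f x (evec i).
Definition dpart2 (i j : 'I_n) (f : 'rV[R]_n -> R) (x : 'rV[R]_n) : R :=
  derive (dpart i f) x (evec j).

Definition grad (f : 'rV[R]_n -> R) (x : 'rV[R]_n) : 'rV[R]_n :=
  \row_i dpart i f x.

Definition Lop (b : 'rV[R]_n -> 'rV[R]_n) (sigma : 'rV[R]_n -> 'M[R]_n)
    (f : 'rV[R]_n -> R) (x : 'rV[R]_n) : R :=
  \sum_i b x ord0 i * dpart i f x
  + 2^-1 * \sum_i \sum_j (sigma x *m (sigma x)^T) i j * dpart2 i j f x.

Definition C2 (f : 'rV[R]_n -> R) : Prop :=
  continuous f /\
  (forall i x, derivable f x (evec i)) /\
  (forall i, continuous (dpart i f)) /\
  (forall i j x, derivable (dpart i f) x (evec j)) /\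
  (forall i j, continuous (dpart2 i j f)).

Definition C12 (phi : R -> 'rV[R]_n -> R) : Prop :=
  continuous (fun p : R * 'rV[R]_n => phi p.1 p.2) /\
  (forall t x, derivable (fun s => phi s x) t 1) /\
  continuous (fun p : R * 'rV[R]_n => derive (fun s => phi s p.2) p.1 1) /\
  (forall i t x, derivable (phi t) x (evec i)) /\
  (forall i, continuous (fun p : R * 'rV[R]_n => dpart i (phi p.1) p.2)) /\
  (forall i j t x, derivable (dpart i (phi t)) x (evec j)) /\
  (forall i j, continuous (fun p : R * 'rV[R]_n => dpart2 i j (phi p.1) p.2)).

Definition dtime (phi : R -> 'rV[R]_n -> R) (t : R) (x : 'rV[R]_n) : R :=
  derive (fun s => phi s x) t 1.

Definition parab_op (g : R -> 'rV[R]_n -> R) (b : 'rV[R]_n -> 'rV[R]_n)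
    (sigma : 'rV[R]_n -> 'M[R]_n) (phi : R -> 'rV[R]_n -> R) t x : R :=
  dtime phi t x + Lop b sigma (phi t) x
  + g (phi t x) (grad (phi t) x *m sigma x).

Definition ellip_op (g : R -> 'rV[R]_n -> R) (b : 'rV[R]_n -> 'rV[R]_n)
    (sigma : 'rV[R]_n -> 'M[R]_n) (phi : 'rV[R]_n -> R) x : R :=
  Lop b sigma phi x + g (phi x) (grad phi x *m sigma x).

Definition parab_super g b sigma (v : R -> 'rV[R]_n -> R) : Prop :=
  continuous (fun p : R * 'rV[R]_n => v p.1 p.2) /\
  forall t x (phi : R -> 'rV[R]_n -> R), C12 phi -> phi t x = v t x ->
    (forall s y, phi s y - v s y <= phi t x - v t x) ->
    parab_op g b sigma phi t x <= 0.

Definition parab_sub g b sigma (v : R -> 'rV[R]_n -> R) : Prop :=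
  continuous (fun p : R * 'rV[R]_n => v p.1 p.2) /\
  forall t x (phi : R -> 'rV[R]_n -> R), C12 phi -> phi t x = v t x ->
    (forall s y, phi t x - v t x <= phi s y - v s y) ->
    parab_op g b sigma phi t x >= 0.

Definition ellip_super g b sigma (u : 'rV[R]_n -> R) : Prop :=
  continuous u /\
  forall x0 (phi : 'rV[R]_n -> R), C2 phi -> phi x0 = u x0 ->
    (forall y, phi y - u y <= phi x0 - u x0) ->
    ellip_op g b sigma phi x0 <= 0.

Definition ellip_sub g b sigma (u : 'rV[R]_n -> R) : Prop :=
  continuous u /\
  forall x0 (phi : 'rV[R]_n -> R), C2 phi -> phi x0 = u x0 ->
    (forall y, phi x0 - u x0 <= phi y - u y) ->
    ellip_op g b sigma phi x0 >= 0.

End Visc.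

(* A test function touching the time-independent function [fun _ x => u x] from
   above or below at (t, x) has, in particular, a global extremum in time at
   (t, x); its time derivative vanishes there, so the parabolic operator reduces
   to the elliptic one applied to the slice [phi t], which is a C^2 test function
   touching u at x.  Conversely, an elliptic test function phi gives the
   time-independent parabolic test function [fun _ => phi]. *)
From mathcomp Require Import all_boot all_order all_algebra.
From mathcomp Require Import all_classical all_reals all_analysis.
Import Order.TTheory GRing.Theory Num.Theory.
Import numFieldNormedType.Exports.
Local Open Scope ring_scope.

Lemma continuous_slice {U V W : topologicalType} (f : U * V -> W) (t : U) :
  continuous f -> continuous (fun y => f (t, y)).
Proof.
move=> cf y; apply: (@continuous_comp _ _ _ (pair t) f); last exact: cf.
by apply: cvg_pair; [exact: cvg_cst | exact: cvg_id].
Qed.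

Lemma continuous_comp_snd {U V W : topologicalType} (f : V -> W) :
  continuous f -> continuous (fun p : U * V => f p.2).
Proof.
move=> cf p; apply: (@continuous_comp _ _ _ snd f); last exact: cf.
exact: cvg_snd.
Qed.

Section GlobalExtremum.
Variables (R : realFieldType) (f : R -> R) (t : R).
Hypothesis df : forall s, derivable f s 1.

Let t_in_itv : t \in `](t - 1), (t + 1)[.
Proof. by rewrite in_itv /= ltrDl ltr01 gtrBl ltr01. Qed.

Let itv_ne : t - 1 <= t + 1.
Proof. by rewrite lerD2l (le_trans (lerN10 R)). Qed.

Lemma derive1_global_max : (forall s, f s <= f t) -> derive f t 1 = 0.
Proof.
move=> fmax; apply: derive_val.
exact: (derive1_at_max itv_ne (fun s _ => df s) t_in_itv (fun s _ => fmax s)).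
Qed.

Lemma derive1_global_min : (forall s, f t <= f s) -> derive f t 1 = 0.
Proof.
move=> fmin; apply: derive_val.
exact: (derive1_at_min itv_ne (fun s _ => df s) t_in_itv (fun s _ => fmin s)).
Qed.

End GlobalExtremum.
Arguments derive1_global_max {R f t}.
Arguments derive1_global_min {R f t}.

Section ViscosityTimeIndependent.
Variables (R : realType) (n : nat).
Variables (g : R -> 'rV[R]_n -> R) (b : 'rV[R]_n -> 'rV[R]_n).
Variable (sigma : 'rV[R]_n -> 'M[R]_n).
Implicit Types (u : 'rV[R]_n -> R) (phi : R -> 'rV[R]_n -> R).

Lemma C2_slice {phi} t : C12 phi -> C2 (phi t).
Proof.
case=> [c [_ [_ [di [cdi [dij cdij]]]]]].
do !split => //; first exact: continuous_slice c.
  by move=> i; exact: continuous_slice (cdi i).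
by move=> i j; exact: continuous_slice (cdij i j).
Qed.

Lemma C12_cst {psi : 'rV[R]_n -> R} : C2 psi -> C12 (fun _ : R => psi).
Proof.
case=> [c [di [cdi [dij cdij]]]].
do !split => //; first exact: continuous_comp_snd c.
- rewrite (_ : (fun p => _) = fun=> 0); first exact: cst_continuous.
  by apply/funext => p; rewrite derive_cst.
- by move=> i; exact: continuous_comp_snd (cdi i).
- by move=> i j; exact: continuous_comp_snd (cdij i j).
Qed.

Lemma parab_opE phi t x :
  parab_op g b sigma phi t x = dtime phi t x + ellip_op g b sigma (phi t) x.
Proof. exact/esym/addrA. Qed.

Lemma parab_op_cst (psi : 'rV[R]_n -> R) t x :
  parab_op g b sigma (fun _ => psi) t x = ellip_op g b sigma psi x.
Proof. by rewrite parab_opE /dtime derive_cst add0r. Qed.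

Lemma parab_op_time_max phi t x : C12 phi ->
  (forall s, phi s x <= phi t x) ->
  parab_op g b sigma phi t x = ellip_op g b sigma (phi t) x.
Proof.
case=> [_ [dt _]] tmax.
by rewrite parab_opE /dtime (derive1_global_max (dt^~ x) tmax) add0r.
Qed.

Lemma parab_op_time_min phi t x : C12 phi ->
  (forall s, phi t x <= phi s x) ->
  parab_op g b sigma phi t x = ellip_op g b sigma (phi t) x.
Proof.
case=> [_ [dt _]] tmin.
by rewrite parab_opE /dtime (derive1_global_min (dt^~ x) tmin) add0r.
Qed.

Lemma ellip_super_of_parab_super u :
  parab_super g b sigma (fun _ => u) -> ellip_super g b sigma u.
Proof.
case=> cu super; split=> [|x psi C2psi psi_x psi_max].
  exact: continuous_slice 0 cu.
rewrite -(parab_op_cst _ 0).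
exact: super 0 x _ (C12_cst C2psi) psi_x (fun _ => psi_max).
Qed.

Lemma parab_super_of_ellip_super u :
  ellip_super g b sigma u -> parab_super g b sigma (fun _ => u).
Proof.
case=> cu super; split=> [|t x phi C12phi phi_x phi_max].
  exact: continuous_comp_snd.
have time_max s : phi s x <= phi t x by have := phi_max s x; rewrite lerD2r.
rewrite parab_op_time_max //.
exact: super x _ (C2_slice t C12phi) phi_x (phi_max t).
Qed.

Lemma ellip_sub_of_parab_sub u :
  parab_sub g b sigma (fun _ => u) -> ellip_sub g b sigma u.
Proof.
case=> cu sub; split=> [|x psi C2psi psi_x psi_min].
  exact: continuous_slice 0 cu.
rewrite -(parab_op_cst _ 0).
exact: sub 0 x _ (C12_cst C2psi) psi_x (fun _ => psi_min).
Qed.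

Lemma parab_sub_of_ellip_sub u :
  ellip_sub g b sigma u -> parab_sub g b sigma (fun _ => u).
Proof.
case=> cu sub; split=> [|t x phi C12phi phi_x phi_min].
  exact: continuous_comp_snd.
have time_min s : phi t x <= phi s x by have := phi_min s x; rewrite lerD2r.
rewrite parab_op_time_min //.
exact: sub x _ (C2_slice t C12phi) phi_x (phi_min t).
Qed.

End ViscosityTimeIndependent.

Theorem lemma2 (R : realType) (n : nat)
    (g : R -> 'rV[R]_n -> R) (b : 'rV[R]_n -> 'rV[R]_n)
    (sigma : 'rV[R]_n -> 'M[R]_n) (u : 'rV[R]_n -> R) :
  continuous u ->
  (parab_super g b sigma (fun (_ : R) x => u x) <-> ellip_super g b sigma u) /\
  (parab_sub g b sigma (fun (_ : R) x => u x) <-> ellip_sub g b sigma u).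
Proof.
(* Continuity of u is already part of each of the four notions. *)
move=> _; split; split.
- exact: ellip_super_of_parab_super.
- exact: parab_super_of_ellip_super.
- exact: ellip_sub_of_parab_sub.
- exact: parab_sub_of_ellip_sub.
Qed.
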